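(* For every real $\lambda<\frac45$ there is $\nu_0(\lambda)$ such that, if $S$ is a numerical semigroup with minimal generators $a_1<a_2<\cdots<a_\nu$ such that $a_2>\frac{c(S)+\mu(S)}{3}$ and $\nu=\nu(S)\ge\nu_0(\lambda)$, then $$\nu(S)|L(S)|\ge\lambda\, c(S).$$
   Context: A numerical semigroup is a submonoid $S\subseteq\mathbb{N}$ with finite complement. $\nu(S)$ is the number of minimal generators, $\mu(S)=a_1$ the multiplicity, $c(S)$ the conductor (least integer with $c(S)+\mathbb{N}\subseteq S$), and $L(S)=\{x\in S:0\le x<c(S)\}$. *)

From Stdlib Require Import Reals.
From mathcomp Require Import all_boot.

Definition numerical_semigroup (S : pred nat) : Prop :=
  [/\ S 0,
      (forall x y, S x -> S y -> S (x + y)) &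
      exists N, forall n, N <= n -> S n].

Definition minimal_generator (S : pred nat) (x : nat) : Prop :=
  [/\ S x, 0 < x &
      ~ exists y z, [/\ 0 < y, 0 < z, S y, S z & x = y + z]].

(* a = [:: a_1; ...; a_nu] is the strictly increasing list of all minimal
   generators of S (so nu(S) = size a, mu(S) = a_1 = nth 0 a 0,
   a_2 = nth 0 a 1). *)
Definition minimal_generators (S : pred nat) (a : seq nat) : Prop :=
  sorted ltn a /\ forall x, x \in a <-> minimal_generator S x.

Definition conductor (S : pred nat) (c : nat) : Prop :=
  (forall n, c <= n -> S n) /\
  (forall d, (forall n, d <= n -> S n) -> c <= d).

Definition Lset (S : pred nat) (c : nat) : seq nat := [seq x <- iota 0 c | S x].

From Stdlib Require Import Reals Lra Classical.
From mathcomp Require Import all_boot zify.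

(* Write m = a_1 and a_2 < ... < a_nu for the other minimal generators.  Every
   nonzero element of the Apery set of m is at least a_2, and one that is not
   a generator is a sum of two such elements, hence at least 2 a_2.  As
   c + m < 3 a_2, every Apery element below c + m is a generator or a sum
   a_i + a_j of two generators.

   For b = 0 and b = a_i the progressions b + j m below c lie in L(S) and are
   disjoint, since these b lie in distinct classes mod m; so |L(S)| >= q + X
   with q = ceil(c/m) and X = sum_i ceil((c - a_i)/m).  Each of the at least
   m - nu remaining classes has a representative y in the window [c, c + m),
   and the least element of S in that class is some a_i + a_j <= y, i <= j.
   Distinct y use distinct pairs (i, j), so summing over the pairs bounds the
   number P of such y by 2P <= nu X and the sum of the 2c - y by m nu X.
   Together these give 4c <= 5 nu |L(S)| for every such S: nu_0 = 0 works,
   even for lambda = 4/5. *)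

Set Implicit Arguments.
Unset Strict Implicit.
Unset Printing Implicit Defensive.

Definition ceil_div m k := (k + m.-1) %/ m.

Lemma ltn_ceil_div m k j : 0 < m -> (j < ceil_div m k) = (j * m < k).
Proof. by move=> m0; rewrite /ceil_div leq_divRL // mulSn; lia. Qed.

Lemma leq_mul_ceil_div m k : 0 < m -> k <= ceil_div m k * m.
Proof. by move=> m0; have := ltn_ceil_div k (ceil_div m k) m0; rewrite ltnn; lia. Qed.

Lemma ceil_div_gt0 m k : 0 < m -> (0 < ceil_div m k) = (0 < k).
Proof. by move=> m0; rewrite ltn_ceil_div. Qed.

Lemma mod_inj_iota c m : {in iota c m &, injective (modn^~ m)}.
Proof.
move=> y y'; rewrite !mem_iota => hy hy' e.
wlog le_yy' : y y' hy hy' e / y <= y'.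
  by move=> hw; case: (leqP y y') => [|/ltnW] h; [|symmetry]; apply: hw.
have : m %| y' - y by rewrite -eqn_mod_dvd // e.
case: (posnP (y' - y)) => [|pos /(dvdn_leq pos)]; lia.
Qed.

Lemma count_le1 (T : eqType) (P : pred T) (s : seq T) :
  uniq s -> {in s &, forall y y', P y -> P y' -> y = y'} -> count P s <= 1.
Proof.
elim: s => [|y s IH] //= /andP[ys us] Puniq.
have Puniq_s : {in s &, forall z z', P z -> P z' -> z = z'}.
  by move=> z z' zs z's; apply: Puniq; rewrite inE ?zs ?z's orbT.
case Py: (P y); last exact: IH.
suff : ~~ has P s by rewrite has_count; lia.
apply/hasPn => z zs; apply: contra ys => Pz.
by rewrite (Puniq y z) ?mem_head ?inE ?zs ?orbT.
Qed.

Lemma leq_sum_witness (I J : eqType) (s : seq I) (t : seq J)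
    (F : I -> nat) (B : J -> nat) (w : I -> J -> bool) :
  uniq s ->
  (forall y, y \in s -> exists2 p, p \in t & w y p && (F y <= B p)) ->
  (forall p, {in s &, forall y y', w y p -> w y' p -> y = y'}) ->
  \sum_(y <- s) F y <= \sum_(p <- t) B p.
Proof.
move=> us witness wuniq.
apply: (@leq_trans (\sum_(y <- s) \sum_(p <- t) w y p * B p)).
  rewrite !big_seq; apply: leq_sum => y ys.
  have [p pt /andP[wyp le_FB]] := witness y ys.
  by rewrite (big_rem p) //= wyp mul1n (leq_trans le_FB) ?leq_addr.
rewrite exchange_big /=; apply: leq_sum => p _.
rewrite -big_distrl /= -[X in _ <= X]mul1n leq_mul2r.
have -> : \sum_(y <- s) (w y p : nat) = count (w^~ p) s.
  by rewrite -sumn_count sumnE big_map.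
by rewrite count_le1 ?orbT.
Qed.

Definition ordered_pairs g := [seq (i, j) | j <- iota 0 g, i <- iota 0 j.+1].

Lemma sum_ordered_pairs (x : nat -> nat) g :
  \sum_(p <- ordered_pairs g) (x p.1 + x p.2) = g.+1 * \sum_(i <- iota 0 g) x i.
Proof.
rewrite big_allpairs_dep; elim: g => [|g IH]; first by rewrite !big_nil.
have iotaS n : iota 0 n.+1 = iota 0 n ++ [:: n] by rewrite -addn1 iotaD.
rewrite [iota 0 g.+1]iotaS big_cat big_seq1 IH big_split !iotaS /=.
rewrite big_const_seq count_predT iter_addn_0 !big_cat !big_seq1 size_cat size_iota /=.
lia.
Qed.

Lemma sum_ceil_div_le_count (P : pred nat) m c (bs : seq nat) :
  0 < m -> uniq [seq b %% m | b <- bs] ->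
  (forall b j, b \in bs -> b + j * m < c -> P (b + j * m)) ->
  \sum_(b <- bs) ceil_div m (c - b) <= count P (iota 0 c).
Proof.
move=> m0 ubs Pprog.
pose prog b := [seq b + j * m | j <- iota 0 (ceil_div m (c - b))].
have uniq_progs : uniq (flatten (map prog bs)).
  elim: bs ubs {Pprog} => [|b bs IH] //= /andP[nb ubs]; rewrite cat_uniq IH // andbT.
  apply/andP; split.
    by rewrite map_inj_uniq ?iota_uniq // => j j' /eqP; rewrite eqn_add2l eqn_pmul2r // => /eqP.
  apply/hasPn => z /flatten_mapP[b' b'bs /mapP[j _ ->]]; apply/negP => /mapP[j' _ e].
  have eb : b' = b %[mod m] by rewrite -(modnMDl j) addnC e addnC modnMDl.
  by move: nb; rewrite -eb (map_f (modn^~ m)).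
rewrite -size_filter; apply: leq_trans (uniq_leq_size uniq_progs _).
  rewrite size_flatten sumnE !big_map; apply/eq_leq/eq_bigr => b _.
  by rewrite size_map size_iota.
move=> z /flatten_mapP[b bbs /mapP[j]]; rewrite mem_iota ltn_ceil_div // => /andP[_ jc] ->.
by rewrite mem_filter mem_iota Pprog //; lia.
Qed.

Definition window_avoiding m c (bs : seq nat) :=
  [seq y <- iota c m | y %% m \notin [seq b %% m | b <- bs]].

Lemma leq_size_window_avoiding m c bs :
  m <= size bs + size (window_avoiding m c bs).
Proof.
set R := [seq b %% m | b <- bs].
rewrite size_filter -[m in m <= _](size_iota c m) -(count_predC (fun y => y %% m \in R)).
rewrite leq_add2r.
have -> : count (fun y => y %% m \in R) (iota c m) = count (mem R) (map (modn^~ m) (iota c m)).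
  by rewrite count_map.
rewrite -size_filter -(size_map (modn^~ m) bs).
apply: uniq_leq_size.
  by rewrite filter_uniq // map_inj_in_uniq ?iota_uniq //; exact: mod_inj_iota.
by move=> r; rewrite mem_filter => /andP[].
Qed.

Lemma window_avoiding_sum m c bs :
  2 * (size (window_avoiding m c bs) * c) <=
    2 * \sum_(y <- window_avoiding m c bs) (2 * c - y) + m * m.
Proof.
set W := window_avoiding m c bs.
have triangle k : 2 * \sum_(y <- iota c k) (y - c) <= k * k.
  elim: k => [|k IH]; first by rewrite big_nil.
  by rewrite -[k.+1]addn1 iotaD big_cat big_seq1 /=; lia.
have sub_sum : \sum_(y <- W) (y - c) <= \sum_(y <- iota c m) (y - c).
  rewrite /W big_filter [X in _ <= X](bigID (fun y => y %% m \notin [seq b %% m | b <- bs])).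
  exact: leq_addr.
have split_c : size W * c <= \sum_(y <- W) (2 * c - y) + \sum_(y <- W) (y - c).
  rewrite -big_split /= mulnC -iter_addn_0 -count_predT -big_const_seq big_seq [X in _ <= X]big_seq.
  by apply: leq_sum => y; rewrite mem_filter mem_iota => /andP[_ /andP[cy _]]; lia.
have := triangle m; lia.
Qed.

Lemma four_fifths_bound c m q X n nu P :
  c <= q * m -> q + X <= n -> m <= nu + P -> 2 * P <= nu * X ->
  2 * (P * c) <= 2 * (m * (nu * X)) + m * m -> 4 * c <= 5 * (nu * n).
Proof.
move=> cqm qXn mP PX PcX.
have nuqXn : nu * q + nu * X <= nu * n by rewrite -mulnDr leq_mul2l qXn orbT.
have [q_le1 | q_gt1] := leqP q 1.
  suff : c <= nu * n by lia.
  by nia.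
have [small_c | large_c] := leqP (2 * c) (5 * m).
  suff : 2 * m <= nu * n by lia.
  by nia.
have m_gt0 : 0 < m by lia.
(* m c <= (nu + P) c <= nu q m + m nu X + m^2/2 <= m nu n + m^2/2 *)
suff : m * (2 * c) <= m * (2 * (nu * n) + m) by rewrite leq_pmul2l //; lia.
have : m * c <= nu * c + P * c by rewrite -mulnDl leq_mul2r mP orbT.
have : nu * c <= nu * (q * m) by rewrite leq_mul2l cqm orbT.
nia.
Qed.

(* The Apery set of m minus 0: when S 0, truncated subtraction excludes every
   e <= m. *)
Definition apery (S : pred nat) m e := S e && ~~ S (e - m).

Lemma not_minimal_generator_split (S : pred nat) x :
  S x -> 0 < x -> ~ minimal_generator S x ->
  exists y z, [/\ 0 < y, 0 < z, S y, S z & x = y + z].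
Proof. by move=> Sx x0 not_gen; apply: NNPP => no_split; apply: not_gen. Qed.

Lemma minimal_generator_ind (S : pred nat) (P : nat -> Prop) :
  (forall x, minimal_generator S x -> P x) ->
  (forall y z, S y -> S z -> 0 < y -> 0 < z -> P y -> P z -> P (y + z)) ->
  forall x, S x -> 0 < x -> P x.
Proof.
move=> Pgen PD; elim/ltn_ind => x IH Sx x0.
case: (classic (minimal_generator S x)) => [/Pgen // | not_gen].
have [y [z [y0 z0 Sy Sz exyz]]] := not_minimal_generator_split Sx x0 not_gen.
by rewrite exyz; apply: PD => //; apply: IH => //; lia.
Qed.

Section Apery.

Variable S : pred nat.
Hypothesis S0 : S 0.
Hypothesis SD : forall x y, S x -> S y -> S (x + y).

Lemma S_addMn b k m : S m -> S b -> S (b + k * m).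
Proof.
move=> Sm Sb; elim: k => [|k IH]; first by rewrite addn0.
by rewrite mulSn addnCA SD.
Qed.

Lemma apery_gt m e : apery S m e -> m < e.
Proof. by case/andP=> _; rewrite ltnNge; apply: contra => /eqP->. Qed.

Lemma apery_leq_mod m b e : S m -> S b -> apery S m e -> b = e %[mod m] -> e <= b.
Proof.
move=> Sm Sb /andP[_ not_Sem] eq_be; rewrite leqNgt; apply/negP => lt_be.
have /dvdnP[k ebk] : m %| e - b by rewrite -eqn_mod_dvd ?(ltnW lt_be) // eq_be.
case: k ebk => [/eqP | k ebk]; first by rewrite mul0n subn_eq0 leqNgt lt_be.
by move: not_Sem; rewrite -(subnKC (ltnW lt_be)) ebk mulSnr addnA addnK S_addMn.
Qed.

Lemma apery_mod_inj m e e' : S m -> apery S m e -> apery S m e' -> e = e' %[mod m] -> e = e'.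
Proof.
move=> Sm ae ae' ee'; apply/eqP; rewrite eqn_leq.
by rewrite (apery_leq_mod Sm (andP ae').1 ae) // (apery_leq_mod Sm (andP ae).1 ae').
Qed.

Lemma apery_summand m u v :
  (forall x, S x -> 0 < x -> m <= x) -> apery S m (u + v) -> S u -> 0 < u -> S v ->
  apery S m u.
Proof.
move=> mult_min /andP[_ not_Suvm] Su u0 Sv; rewrite /apery Su /=.
apply: contra not_Suvm => Sum.
by rewrite -addnBAC ?mult_min // SD.
Qed.

End Apery.

Section Generators.

Variables (S : pred nat) (m : nat) (G : seq nat).
Hypothesis S0 : S 0.
Hypothesis SD : forall x y, S x -> S y -> S (x + y).
Hypothesis gens_sorted : sorted ltn (m :: G).
Hypothesis gensP : forall x, x \in m :: G <-> minimal_generator S x.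

Let a2 := nth 0 G 0.

Lemma S_mult : S m.
Proof. by have [] := iffLR (gensP m) (mem_head m G). Qed.

Lemma mult_gt0 : 0 < m.
Proof. by have [] := iffLR (gensP m) (mem_head m G). Qed.

Lemma gen_gt_mult x : x \in G -> m < x.
Proof. by move=> xG; move/allP: (order_path_min ltn_trans gens_sorted); apply. Qed.

Lemma a2_le_gen x : x \in G -> a2 <= x.
Proof.
move=> xG; have /andP[_ sG] : uniq G && sorted leq G.
  by rewrite -ltn_sorted_uniq_leq (path_sorted gens_sorted).
rewrite -(nth_index 0 xG); apply: (sorted_leq_nth leq_trans leqnn) => //.
- by rewrite inE (leq_ltn_trans (leq0n _) (_ : index x G < _)) ?index_mem.
- by rewrite inE index_mem.
Qed.

Lemma mult_min x : S x -> 0 < x -> m <= x.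
Proof.
move: x; apply: (@minimal_generator_ind S (fun x => m <= x)) => [x /gensP | y z _ _ _ _ my _].
  by rewrite inE => /orP[/eqP-> // | /gen_gt_mult /ltnW].
exact: leq_trans my (leq_addr _ _).
Qed.

Lemma gen_apery x : x \in G -> apery S m x.
Proof.
move=> xG; have [Sx x0 indecomposable] : minimal_generator S x.
  by apply/gensP; rewrite inE xG orbT.
rewrite /apery Sx; apply/negP => Sxm; apply: indecomposable.
have mx := gen_gt_mult xG; exists m, (x - m); split; rewrite ?S_mult ?mult_gt0 //; lia.
Qed.

Lemma apery_gen_or_sum e : apery S m e ->
  e \in G \/ exists u v, [/\ apery S m u, apery S m v & e = u + v].
Proof.
move=> ae; have [Se _] := andP ae; have me := apery_gt S0 ae.
case: (classic (minimal_generator S e)) => [/gensP | not_gen].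
  by rewrite inE => /orP[/eqP em | eG]; [lia | left].
have e_gt0 : 0 < e by apply: leq_ltn_trans (leq0n m) me.
have [u [v [u0 v0 Su Sv euv]]] := not_minimal_generator_split Se e_gt0 not_gen.
right; exists u, v; split => //.
  by apply: (apery_summand SD mult_min (v := v)); rewrite -?euv.
by apply: (apery_summand SD mult_min (v := u)); rewrite // addnC -euv.
Qed.

Lemma a2_le_apery e : apery S m e -> a2 <= e.
Proof.
move=> ae; have /andP[Se _] := ae.
have e0 : 0 < e by apply: leq_ltn_trans (leq0n m) (apery_gt S0 ae).
move: e Se e0 ae; apply: (@minimal_generator_ind S (fun x => apery S m x -> a2 <= x)).
  move=> x /gensP; rewrite inE => /orP[/eqP-> /(apery_gt S0) | /a2_le_gen //].
  by rewrite ltnn.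
move=> y z Sy Sz y0 _ IHy _ ayz.
exact: leq_trans (IHy (apery_summand SD mult_min ayz Sy y0 Sz)) (leq_addr _ _).
Qed.

Lemma apery_small_gen e : apery S m e -> e < 2 * a2 -> e \in G.
Proof.
case/apery_gen_or_sum => [// | [u [v [au av ->]]]].
by have := a2_le_apery au; have := a2_le_apery av; lia.
Qed.

Lemma gens_mod_uniq : uniq [seq b %% m | b <- 0 :: G].
Proof.
rewrite map_inj_in_uniq.
  rewrite /= (sorted_uniq ltn_trans ltnn (path_sorted gens_sorted)) andbT.
  by apply/negP => /gen_gt_mult.
move=> b b'; rewrite !inE => /orP[/eqP-> | bG] /orP[/eqP-> | b'G] e //.
- by have := apery_leq_mod SD S_mult S0 (gen_apery b'G) e; have := gen_gt_mult b'G; lia.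
- by have := apery_leq_mod SD S_mult S0 (gen_apery bG) (esym e); have := gen_gt_mult bG; lia.
- exact: (apery_mod_inj SD S_mult (gen_apery bG) (gen_apery b'G) e).
Qed.

Variable c : nat.
Hypothesis conductor_S : forall n, c <= n -> S n.
Hypothesis a2_large : c + m < 3 * a2.

Let W := window_avoiding m c (0 :: G).

Lemma window_gen_pair y : y \in W ->
  exists i j, [/\ i <= j < size G, nth 0 G i + nth 0 G j <= y
                & nth 0 G i + nth 0 G j = y %[mod m]].
Proof.
rewrite mem_filter mem_iota => /andP[new_res /andP[cy ycm]].
have y_reached : exists w, [&& S w, w <= y & w == y %[mod m]].
  by exists y; rewrite conductor_S ?leqnn ?eqxx.
have [w /and3P[Sw wy /eqP wy_mod] w_min] := ex_minnP y_reached.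
have w_gt0 : 0 < w.
  rewrite lt0n; apply: contraNneq new_res => w0.
  by rewrite -wy_mod w0 (map_f (modn^~ m)) ?mem_head.
have aw : apery S m w.
  rewrite /apery Sw; apply/negP => Swm; have mw := mult_min Sw w_gt0.
  have wm_mod : w - m = w %[mod m] by rewrite -{2}(subnK mw) modnDr.
  have := w_min (w - m); rewrite Swm (leq_trans (leq_subr _ _) wy) wm_mod wy_mod eqxx.
  by have := mult_gt0; lia.
have [wG | [u [v [au av euv]]]] := apery_gen_or_sum aw.
  by move: new_res; rewrite -wy_mod (map_f (modn^~ m)) // inE wG orbT.
have [a2u a2v] := (a2_le_apery au, a2_le_apery av).
have uG : u \in G by apply: apery_small_gen au _; lia.
have vG : v \in G by apply: apery_small_gen av _; lia.
have [le_uv | lt_vu] := leqP (index u G) (index v G).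
  by exists (index u G), (index v G); rewrite !nth_index // -euv le_uv index_mem.
by exists (index v G), (index u G); rewrite !nth_index // addnC -euv ltnW // index_mem.
Qed.

Lemma window_sum_le_gens (F B : nat -> nat) :
  (forall y u v, y \in W -> u \in G -> v \in G -> u + v <= y -> F y <= B u + B v) ->
  \sum_(y <- W) F y <= (size G).+1 * \sum_(b <- G) B b.
Proof.
move=> FB; rewrite [\sum_(b <- G) _](big_nth 0) /index_iota subn0.
apply: (leq_trans _ (eq_leq (sum_ordered_pairs (fun i => B (nth 0 G i)) (size G)))).
pose pair_sum p := nth 0 G p.1 + nth 0 G p.2.
apply: (leq_sum_witness (w := fun y p => (pair_sum p <= y) && (pair_sum p == y %[mod m]))).
- by rewrite filter_uniq ?iota_uniq.
- move=> y yW; have [i [j [/andP[le_ij lt_jG] le_sy eq_sy]]] := window_gen_pair yW.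
  exists (i, j); first by apply/allpairsPdep; exists j, i; rewrite !mem_iota; split => //; lia.
  by rewrite /pair_sum /= le_sy eq_sy eqxx FB // mem_nth // (leq_ltn_trans le_ij lt_jG).
- move=> p y y'; rewrite !mem_filter => /andP[_ yI] /andP[_ y'I].
  move=> /andP[_ /eqP e] /andP[_ /eqP e'].
  by apply: (mod_inj_iota yI y'I); rewrite /= -e -e'.
Qed.

Lemma four_fifths_Lset : 4 * c <= 5 * ((size G).+1 * size (Lset S c)).
Proof.
have m_gt0 := mult_gt0.
pose x b := ceil_div m (c - b).
have window_gens y u v : y \in W -> u \in G -> v \in G -> u + v <= y ->
    [/\ c - u <= x u * m, c - v <= x v * m, 0 < x u & 0 < x v].
  rewrite mem_filter mem_iota => /andP[_ /andP[_ ycm]] uG vG uvy.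
  have [mu mv] := (gen_gt_mult uG, gen_gt_mult vG).
  by rewrite !leq_mul_ceil_div // !ceil_div_gt0 // !subn_gt0; split => //; lia.
apply: (@four_fifths_bound c m (ceil_div m c) (\sum_(b <- G) x b) _ _ (size W)).
- exact: leq_mul_ceil_div.
- rewrite /Lset size_filter.
  have := @sum_ceil_div_le_count S m c (0 :: G) m_gt0 gens_mod_uniq.
  rewrite big_cons subn0; apply => b j b_in _; apply: S_addMn => //; first exact: S_mult.
  by move: b_in; rewrite inE => /orP[/eqP-> // | /gen_apery/andP[]].
- exact: (leq_size_window_avoiding m c (0 :: G)).
- have := @window_sum_le_gens (fun=> 2) x.
  rewrite big_const_seq count_predT iter_addn_0 mulnC; apply => y u v yW uG vG uvy.
  by have [] := window_gens y u v yW uG vG uvy; lia.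
- have sum_le : \sum_(y <- W) (2 * c - y) <= m * ((size G).+1 * \sum_(b <- G) x b).
    rewrite mulnCA big_distrr; apply: window_sum_le_gens => y u v yW uG vG uvy /=.
    by have [] := window_gens y u v yW uG vG uvy; lia.
  by have := window_avoiding_sum m c (0 :: G); rewrite -/W; lia.
Qed.

End Generators.

Lemma Rmult_INR_le_of_four_fifths (lam : R) c k :
  Rlt lam (Rdiv 4 5) -> 4 * c <= 5 * k -> Rle (Rmult lam (INR c)) (INR k).
Proof.
move=> lam_lt /leP/le_INR; rewrite -!multE !mult_INR /=.
by have := pos_INR c; nra.
Qed.

Theorem proposition4p9 (lam : R) :
  Rlt lam (Rdiv 4 5) ->
  exists nu0 : nat,
    forall (S : pred nat) (a : seq nat) (c : nat),
      numerical_semigroup S ->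
      minimal_generators S a ->
      conductor S c ->
      (* a_2 > (c(S) + mu(S)) / 3, with mu(S) = a_1 *)
      c + nth 0 a 0 < 3 * nth 0 a 1 ->
      nu0 <= size a ->
      Rle (Rmult lam (INR c)) (INR (size a * size (Lset S c))).
Proof.
move=> lam_lt; exists 0 => S a c [S0 SD _] [a_sorted aP] [conductor_S _] a2_large _.
case: a a_sorted aP a2_large => [|m G] a_sorted aP a2_large; first by rewrite muln0 in a2_large.
apply: Rmult_INR_le_of_four_fifths lam_lt _.
exact: (four_fifths_Lset S0 SD a_sorted aP conductor_S a2_large).
Qed.
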